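(* Let $\alpha>0$, $\beta,\eta,\kappa\in\mathbb{R}$, $\rho>0$, $p\ge 1$, and $0\le a<x$. Let $f,g$ be two positive functions on $[0,\infty)$ with $f,g\in X^{p}_{c}(a,x)$ (for some $c\in\mathbb{R}$), such that ${}^{\rho}\mathcal{I}^{\alpha,\beta}_{a+,\eta,\kappa}f(x)<\infty$ and ${}^{\rho}\mathcal{I}^{\alpha,\beta}_{a+,\eta,\kappa}g(x)<\infty$. If there are real numbers $m,M>0$ with $0<m\leq \frac{f(t)}{g(t)}\leq M$ for all $t\in[a,x]$, then $$\frac{1}{M}\,{}^{\rho}\mathcal{I}^{\alpha,\beta}_{a+,\eta,\kappa}(fg)(x)\leq\frac{1}{(m+1)(M+1)}\,{}^{\rho}\mathcal{I}^{\alpha,\beta}_{a+,\eta,\kappa}(f+g)^{2}(x)\leq\frac{1}{m}\,{}^{\rho}\mathcal{I}^{\alpha,\beta}_{a+,\eta,\kappa}(fg)(x).$$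
   Context: For $c\in\mathbb{R}$ and $1\le p<\infty$, $X^{p}_{c}(a,b)$ denotes the space of Lebesgue measurable functions $f$ on $(a,b)$ with $\left(\int_a^b |t^{c}f(t)|^{p}\,\frac{dt}{t}\right)^{1/p}<\infty$. For $\alpha>0$, $\beta,\eta,\kappa\in\mathbb{R}$, $\rho>0$, $0\le a<x$, and a function $\varphi$, the generalized (Katugampola) fractional integral is $${}^{\rho}\mathcal{I}^{\alpha,\beta}_{a+,\eta,\kappa}\varphi(x)=\frac{\rho^{1-\beta}x^{\kappa}}{\Gamma(\alpha)}\int_{a}^{x}\frac{\tau^{\rho(\eta+1)-1}}{(x^{\rho}-\tau^{\rho})^{1-\alpha}}\varphi(\tau)\,d\tau,$$ whenever the integral exists. ${}^{\rho}\mathcal{I}^{\alpha,\beta}_{a+,\eta,\kappa}(fg)(x)$ and ${}^{\rho}\mathcal{I}^{\alpha,\beta}_{a+,\eta,\kappa}(f+g)^{2}(x)$ denote the operator applied to $\tau\mapsto f(\tau)g(\tau)$, resp. $\tau\mapsto(f(\tau)+g(\tau))^2$, evaluated at $x$. *)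

From HB Require Import structures.
From mathcomp Require Import all_boot all_order all_algebra.
From mathcomp Require Import all_classical all_reals all_analysis.
Set Implicit Arguments. Unset Strict Implicit. Unset Printing Implicit Defensive.
Import Order.TTheory GRing.Theory Num.Theory.
Local Open Scope classical_set_scope.
Local Open Scope ring_scope.

Definition Gammaf {R : realType} (a : R) : R :=
  fine (\int[@lebesgue_measure R]_(t in `]0%R, +oo[) ((t `^ (a - 1)) * expR (- t))%:E)%E.

Definition Xpc {R : realType} (c p a b : R) (f : R -> R) : Prop :=
  measurable_fun `]a, b[ f /\
  (\int[@lebesgue_measure R]_(t in `]a, b[)
      ((`|t `^ c * f t| `^ p) / t)%:E < +oo)%E.

Definition katugampola {R : realType} (rho alpha beta eta kappa a : R)
    (phi : R -> R) (x : R) : \bar R :=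
  ((rho `^ (1 - beta) * x `^ kappa / Gammaf alpha)%:E *
   \int[@lebesgue_measure R]_(tau in `]a, x[)
      ((tau `^ (rho * (eta + 1) - 1) /
        (x `^ rho - tau `^ rho) `^ (1 - alpha)) * phi tau)%:E)%E.

From HB Require Import structures.
From mathcomp Require Import all_boot all_order all_algebra.
From mathcomp Require Import all_classical all_reals all_analysis.
From mathcomp Require Import lra.
Import Order.TTheory GRing.Theory Num.Theory measurable_realfun.
Local Open Scope classical_set_scope.
Local Open Scope ring_scope.

(* From [m <= f/g <= M] one gets pointwise [(M + 1) f <= M (f + g)] and
   [(m + 1) g <= f + g], whose product is [(m + 1)(M + 1) f g <= M (f + g)^2];
   symmetrically [m (f + g) <= (m + 1) f] and [f + g <= (M + 1) g] give
   [m (f + g)^2 <= (m + 1)(M + 1) f g].  The Katugampola integral has a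
   nonnegative kernel and a nonnegative constant in front, so it is a
   positively homogeneous monotone functional on nonnegative measurable
   functions, and the pointwise inequalities survive integration. *)

Lemma sqrD_mul_ratio_bounds (R : realFieldType) (u v m M : R) :
  0 < v -> 0 < m -> m * v <= u -> u <= M * v ->
  M^-1 * (u * v) <= ((m + 1) * (M + 1))^-1 * (u + v) ^+ 2 /\
  ((m + 1) * (M + 1))^-1 * (u + v) ^+ 2 <= m^-1 * (u * v).
Proof.
move=> v0 m0 mvu uMv.
have u0 : 0 < u by apply: lt_le_trans mvu; rewrite mulr_gt0.
have M0 : 0 < M by rewrite -(pmulr_lgt0 _ v0); apply: lt_le_trans uMv.
have mM0 : 0 < (m + 1) * (M + 1) by rewrite mulr_gt0 // ltr_wpDl // ltW.
have upper : (m + 1) * (M + 1) * (u * v) <= M * (u + v) ^+ 2.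
  have : (M + 1) * u * ((m + 1) * v) <= M * (u + v) * (u + v).
    by apply: ler_pM; rewrite ?mulr_ge0 //; lra.
  by rewrite expr2; lra.
have lower : m * (u + v) ^+ 2 <= (m + 1) * (M + 1) * (u * v).
  have : m * (u + v) * (u + v) <= (m + 1) * u * ((M + 1) * v).
    by apply: ler_pM; rewrite ?mulr_ge0 //; lra.
  by rewrite expr2; lra.
by split; rewrite ler_pdivrMl // mulrCA ler_pdivlMl.
Qed.

Definition katugampola_kernel {R : realType} (rho alpha eta x tau : R) : R :=
  tau `^ (rho * (eta + 1) - 1) / (x `^ rho - tau `^ rho) `^ (1 - alpha).

(* No hypothesis on [tau] is needed: [powR] is nonnegative even at negative bases. *)
Lemma katugampola_kernel_ge0 {R : realType} (rho alpha eta x tau : R) :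
  0 <= katugampola_kernel rho alpha eta x tau.
Proof. by rewrite divr_ge0 ?powR_ge0. Qed.

Lemma measurable_katugampola_kernel {R : realType} (rho alpha eta x : R) :
  measurable_fun setT (katugampola_kernel rho alpha eta x).
Proof.
apply: (eq_measurable_fun (fun tau : R => tau `^ (rho * (eta + 1) - 1) *
                             (x `^ rho - tau `^ rho) `^ (- (1 - alpha)))).
  by move=> t _; rewrite powRN.
apply: measurable_funM; first exact: measurable_powR.
apply: (measurableT_comp (measurable_powR _)).
exact: measurable_funB (measurable_cst _) (measurable_powR _).
Qed.

Section KatugampolaPositivity.
Variables (R : realType) (rho alpha beta eta kappa a x : R).

Let I (phi : R -> R) := katugampola rho alpha beta eta kappa a phi x.
Let C := rho `^ (1 - beta) * x `^ kappa / Gammaf alpha.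
Let K := katugampola_kernel rho alpha eta x.

Let IE phi :
  I phi = (C%:E * \int[lebesgue_measure]_(tau in `]a, x[) (K tau * phi tau)%:E)%E.
Proof. by []. Qed.

Let C_ge0 : 0 <= C.
Proof.
rewrite divr_ge0 ?mulr_ge0 ?powR_ge0 // fine_ge0 // integral_ge0 // => t _.
by rewrite lee_fin mulr_ge0 ?powR_ge0 ?expR_ge0.
Qed.

Let measurable_K : measurable_fun `]a, x[ K.
Proof. exact: measurable_funS (measurable_katugampola_kernel _ _ _ _). Qed.

Let in_itvP t : t \in `]a, x[ -> a < t < x.
Proof. by rewrite in_itv. Qed.

Lemma katugampolaZ (c : R) (phi : R -> R) : 0 <= c ->
  measurable_fun `]a, x[ phi -> (forall t, a < t < x -> 0 <= phi t) ->
  (c%:E * I phi = I (fun t => (c * phi t)%R))%E.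
Proof.
move=> c0 mphi phi0; rewrite !IE muleCA -ge0_integralZl_EFin //.
- by congr (_ * _)%E; apply: eq_integral => t _; rewrite -EFinM mulrCA.
- by move=> t /in_itvP t_ax; rewrite lee_fin mulr_ge0 ?katugampola_kernel_ge0 ?phi0.
- exact/measurable_EFinP/measurable_funM.
Qed.

Lemma le_katugampola (phi psi : R -> R) :
  measurable_fun `]a, x[ phi -> measurable_fun `]a, x[ psi ->
  (forall t, a < t < x -> 0 <= phi t <= psi t) -> (I phi <= I psi)%E.
Proof.
move=> mphi mpsi phi_psi; rewrite !IE.
apply: lee_wpmul2l; first by rewrite lee_fin.
apply: ge0_le_integral => //.
- move=> t /in_itvP /phi_psi /andP[phi0 _].
  by rewrite lee_fin mulr_ge0 ?katugampola_kernel_ge0.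
- exact/measurable_EFinP/measurable_funM.
- exact/measurable_EFinP/measurable_funM.
- move=> t /in_itvP /phi_psi /andP[_ le_phi_psi].
  by rewrite lee_fin ler_wpM2l ?katugampola_kernel_ge0.
Qed.

Lemma ler_katugampolaZ (c1 c2 : R) (phi psi : R -> R) : 0 <= c1 -> 0 <= c2 ->
  measurable_fun `]a, x[ phi -> measurable_fun `]a, x[ psi ->
  (forall t, a < t < x -> 0 <= phi t) -> (forall t, a < t < x -> 0 <= psi t) ->
  (forall t, a < t < x -> c1 * phi t <= c2 * psi t) ->
  (c1%:E * I phi <= c2%:E * I psi)%E.
Proof.
move=> c10 c20 mphi mpsi phi0 psi0 le_phi_psi.
rewrite !katugampolaZ //; apply: le_katugampola.
- exact: measurable_funM (measurable_cst _) mphi.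
- exact: measurable_funM (measurable_cst _) mpsi.
- by move=> t t_ax; rewrite le_phi_psi ?mulr_ge0 ?phi0.
Qed.

End KatugampolaPositivity.

Theorem theorem14 (R : realType) (alpha beta eta kappa rho p c a x m M : R)
  (f g : R -> R) :
  0 < alpha -> 0 < rho -> 1 <= p -> 0 <= a -> a < x ->
  (forall t, 0 <= t -> 0 < f t) -> (forall t, 0 <= t -> 0 < g t) ->
  Xpc c p a x f -> Xpc c p a x g ->
  (katugampola rho alpha beta eta kappa a f x < +oo)%E ->
  (katugampola rho alpha beta eta kappa a g x < +oo)%E ->
  0 < m -> 0 < M ->
  (forall t, a <= t <= x -> m <= f t / g t <= M) ->
  ((M^-1)%R%:E * katugampola rho alpha beta eta kappa a (fun t => (f t * g t)%R) x
     <= (((m + 1) * (M + 1))^-1)%R%:E *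
        katugampola rho alpha beta eta kappa a (fun t => ((f t + g t) ^+ 2)%R) x)%E /\
  ((((m + 1) * (M + 1))^-1)%R%:E *
        katugampola rho alpha beta eta kappa a (fun t => ((f t + g t) ^+ 2)%R) x
     <= (m^-1)%R%:E * katugampola rho alpha beta eta kappa a (fun t => (f t * g t)%R) x)%E.
Proof.
move=> _ _ _ a0 _ f0 g0 [mf _] [mg _] _ _ m0 M0 fg_bounds.
have pos t : a < t < x -> 0 < f t /\ 0 < g t.
  by case/andP=> /ltW /(le_trans a0) t0 _; split; [exact: f0 | exact: g0].
have pointwise t : a < t < x ->
    M^-1 * (f t * g t) <= ((m + 1) * (M + 1))^-1 * (f t + g t) ^+ 2 /\
    ((m + 1) * (M + 1))^-1 * (f t + g t) ^+ 2 <= m^-1 * (f t * g t).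
  move=> t_ax; have [ft0 gt0] := pos t t_ax.
  have /andP[] : m <= f t / g t <= M by apply: fg_bounds; case/andP: t_ax => /ltW -> /ltW ->.
  by rewrite ler_pdivlMr // ler_pdivrMr //; apply: sqrD_mul_ratio_bounds.
have mfg := measurable_funM mf mg.
have mfg2 := measurable_funX 2 (measurable_funD mf mg).
have fg0 t : a < t < x -> 0 <= f t * g t.
  by move=> /pos[ft0 gt0]; rewrite mulr_ge0 ?ltW.
have sqr0 t : a < t < x -> 0 <= (f t + g t) ^+ 2 by rewrite sqr_ge0.
have invM0 : 0 <= M^-1 by rewrite invr_ge0 ltW.
have invm0 : 0 <= m^-1 by rewrite invr_ge0 ltW.
have invmM0 : 0 <= ((m + 1) * (M + 1))^-1.
  by rewrite invr_ge0 mulr_ge0 // addr_ge0 // ltW.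
by split; apply: ler_katugampolaZ => // t /pointwise[].
Qed.
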